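(* Let $A\in\mathbb{R}^{m\times n}$ be semi-monotone (i.e. $A^{\dagger}\geq 0$), and let $A=M-N=U-V$ be two proper weak regular splittings of $A$. Then $\rho(H)=\rho(U^{\dagger}VM^{\dagger}N)<1$.
   Context: All matrices are real. $X^{\dagger}$ denotes the Moore–Penrose inverse of $X$, and $\rho(\cdot)$ the spectral radius. For a matrix $X$, $X\geq 0$ means that all entries of $X$ are nonnegative and at least one entry is positive; $X\geq Y$ means $X-Y\geq 0$. $R(X)$ and $N(X)$ denote range and null space. A splitting $A=U-V$ is proper if $R(U)=R(A)$ and $N(U)=N(A)$; it is a proper weak regular splitting if it is proper, $U^{\dagger}\geq 0$ and $U^{\dagger}V\geq 0$. $H=U^{\dagger}VM^{\dagger}N$ is the iteration matrix of the alternating scheme $x^{i+1}=U^{\dagger}VM^{\dagger}Nx^{i}+U^{\dagger}(VM^{\dagger}+I)b$. *)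

From HB Require Import structures.
From mathcomp Require Import all_boot all_order all_algebra.
From mathcomp Require Import complex.
From mathcomp Require Import boolp classical_sets reals.
Set Implicit Arguments. Unset Strict Implicit. Unset Printing Implicit Defensive.
Import Order.TTheory GRing.Theory Num.Theory.
Local Open Scope ring_scope.
Local Open Scope classical_set_scope.

Section Defs.
Variable R : realType.

Definition is_mpinv (m n : nat) (A : 'M[R]_(m, n)) (X : 'M[R]_(n, m)) : Prop :=
  [/\ A *m X *m A = A, X *m A *m X = X,
      (A *m X)^T = A *m X & (X *m A)^T = X *m A].

(* X >= 0 : all entries nonnegative and at least one positive. *)
Definition mx_nonneg (m n : nat) (X : 'M[R]_(m, n)) : Prop :=
  (forall i j, 0 <= X i j) /\ (exists i j, 0 < X i j).

Definition mx_range (m n : nat) (X : 'M[R]_(m, n)) : set 'cV[R]_m :=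
  [set y | exists x : 'cV[R]_n, y = X *m x].
Definition mx_null (m n : nat) (X : 'M[R]_(m, n)) : set 'cV[R]_n :=
  [set x | X *m x = 0].

Definition proper_weak_regular_splitting (m n : nat)
    (A U V : 'M[R]_(m, n)) (Ud : 'M[R]_(n, m)) : Prop :=
  [/\ A = U - V,
      mx_range U = mx_range A /\ mx_null U = mx_null A,
      is_mpinv U Ud, mx_nonneg Ud & mx_nonneg (Ud *m V)].

Definition spectral_radius (n : nat) (H : 'M[R]_n) : R :=
  sup [set Normc.normc l | l in
        [set l : R[i] | eigenvalue (map_mx (fun x : R => (x%:C)%C) H) l]].
End Defs.

From HB Require Import structures.
From mathcomp Require Import all_boot all_order all_algebra.
From mathcomp Require Import complex.
From mathcomp Require Import boolp classical_sets reals.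
Import Order.TTheory GRing.Theory Num.Theory.
Local Open Scope ring_scope.
Local Open Scope classical_set_scope.
Set Implicit Arguments. Unset Strict Implicit.

(* Let H = U^+ V M^+ N.  Since the splittings are proper, M^+ M and A A^+
   act as identities where needed, and one finds
   H A^+ = A^+ - (U^+ + U^+ V M^+).
   If a nonzero row vector a >= 0 satisfied a H >= l a with l >= 1, multiplying
   by A^+ >= 0 would give a (U^+ + U^+ V M^+) <= (1 - l) a A^+ <= 0, hence
   a U^+ = 0, so a H = 0 and a = 0.  But for a complex eigenvector y of H with
   eigenvalue z, the entrywise modulus |y| satisfies |y| H >= |z| |y| because
   H >= 0; so every eigenvalue has modulus < 1. *)

Notation nnegmx := (mxOver Num.nneg).

Section ProperWeakRegularSplittings.
Variable R : realType.

Lemma eq_mx_col (p q : nat) (X Y : 'M[R]_(p, q)) :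
  (forall j, col j X = col j Y) -> X = Y.
Proof.
move=> eqXY; apply/matrixP => i j.
by have /matrixP /(_ i 0) := eqXY j; rewrite !mxE.
Qed.

Lemma col_mulmx (p q r : nat) (X : 'M[R]_(p, q)) (Y : 'M[R]_(q, r)) j :
  col j (X *m Y) = X *m col j Y.
Proof. by rewrite !colE mulmxA. Qed.

Lemma mx_null_mulmx_pinv (m n : nat) (A M : 'M[R]_(m, n)) (Md : 'M[R]_(n, m)) :
  M *m Md *m M = M -> mx_null M `<=` mx_null A -> A *m (Md *m M) = A.
Proof.
move=> MMdM nullMA; apply/eqP; rewrite eq_sym -subr_eq0 -{1}[A]mulmx1 -mulmxBr.
apply/eqP/eq_mx_col => j; rewrite col_mulmx col0; apply: nullMA.
by rewrite /mx_null /= -col_mulmx mulmxBr mulmx1 mulmxA MMdM subrr col0.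
Qed.

Lemma mx_range_mulmx_pinv (m n : nat) (A M : 'M[R]_(m, n)) (Ad : 'M[R]_(n, m)) :
  A *m Ad *m A = A -> mx_range M `<=` mx_range A -> A *m Ad *m M = M.
Proof.
move=> AAdA rangeMA; apply: eq_mx_col => j; rewrite col_mulmx.
have [|x ->] := rangeMA (col j M).
  by exists (col j 1%:M); rewrite -col_mulmx mulmx1.
by rewrite mulmxA AAdA.
Qed.

(* [Md *m M] is the orthogonal projector onto the row space of [M], which
   contains the columns of [Ad] once [N(M)] is contained in [N(A)]. *)
Lemma mx_null_sub_pinv_mulmx (m n : nat) (A M : 'M[R]_(m, n))
    (Ad Md : 'M[R]_(n, m)) :
  is_mpinv A Ad -> is_mpinv M Md -> mx_null M `<=` mx_null A ->
  Md *m M *m Ad = Ad.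
Proof.
move=> [_ AdAAd _ AdAT] [MMdM _ _ MdMT] nullMA.
have AMdM := mx_null_mulmx_pinv MMdM nullMA.
have -> : Ad = A^T *m (Ad^T *m Ad) by rewrite -{1}AdAAd -AdAT trmx_mul mulmxA.
by rewrite !mulmxA -MdMT -trmx_mul AMdM.
Qed.

Lemma mx_range_sub_pinv_mulmx (m n : nat) (A M : 'M[R]_(m, n))
    (Ad Md : 'M[R]_(n, m)) :
  is_mpinv A Ad -> is_mpinv M Md -> mx_range M `<=` mx_range A ->
  Md *m A *m Ad = Md.
Proof.
move=> [AAdA _ AAdT _] [_ MdMMd MMdT _] rangeMA.
have AAdM := mx_range_mulmx_pinv AAdA rangeMA.
have -> : Md = Md *m (Md^T *m M^T) by rewrite -trmx_mul MMdT mulmxA MdMMd.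
by rewrite -!mulmxA -AAdT -trmx_mul AAdM.
Qed.

Lemma proper_splitting_mulmx_pinv (m n : nat) (A M N : 'M[R]_(m, n))
    (Ad Md : 'M[R]_(n, m)) :
  is_mpinv A Ad -> proper_weak_regular_splitting A M N Md ->
  Md *m N *m Ad = Ad - Md.
Proof.
move=> pinvA [eqA [/seteqP[rangeMA _] /seteqP[nullMA _]] pinvM _ _].
have MdMAd := mx_null_sub_pinv_mulmx pinvA pinvM nullMA.
have MdAAd := mx_range_sub_pinv_mulmx pinvA pinvM rangeMA.
have -> : N = M - A by rewrite eqA opprB addrC subrK.
by rewrite mulmxBr mulmxBl MdMAd MdAAd.
Qed.

Lemma mx_nonneg_nnegmx (p q : nat) (X : 'M[R]_(p, q)) :
  mx_nonneg X -> X \is a nnegmx.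
Proof. by move=> [X_ge0 _]; apply/mxOverP => i j; rewrite nnegrE. Qed.

Lemma nnegmxD (p q : nat) (X Y : 'M[R]_(p, q)) :
  X \is a nnegmx -> Y \is a nnegmx -> X + Y \is a nnegmx.
Proof.
move=> /mxOverP X_ge0 /mxOverP Y_ge0.
by apply/mxOverP => i j; rewrite mxE rpredD.
Qed.

Lemma nnegmxZ (p q : nat) (c : R) (X : 'M[R]_(p, q)) :
  0 <= c -> X \is a nnegmx -> c *: X \is a nnegmx.
Proof.
by move=> c_ge0 /mxOverP X_ge0; apply/mxOverP => i j; rewrite mxE rpredM.
Qed.

Lemma nnegmx_anti (p q : nat) (X : 'M[R]_(p, q)) :
  X \is a nnegmx -> - X \is a nnegmx -> X = 0.
Proof.
move=> /mxOverP X_ge0 /mxOverP NX_ge0; apply/matrixP => i j.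
have := NX_ge0 i j; rewrite mxE !nnegrE oppr_ge0 => X_le0.
by apply/eqP; rewrite mxE eq_le X_le0 -nnegrE X_ge0.
Qed.

Lemma subinvariant_row_eq0 (m n : nat) (Ad Ud B : 'M[R]_(n, m))
    (W : 'M[R]_(m, n)) (a : 'rV[R]_n) (l : R) :
  Ad \is a nnegmx -> Ud \is a nnegmx -> B \is a nnegmx ->
  a \is a nnegmx -> 1 <= l ->
  Ud *m W *m Ad = Ad - (Ud + B) ->
  a *m (Ud *m W) - l *: a \is a nnegmx -> a = 0.
Proof.
move=> Ad_ge0 Ud_ge0 B_ge0 a_ge0 l_ge1 HAd sub_a.
have aUd_ge0 : a *m Ud \is a nnegmx by rewrite mxOverM.
have aB_ge0 : a *m B \is a nnegmx by rewrite mxOverM.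
have aUdB0 : a *m Ud + a *m B = 0.
  apply: nnegmx_anti; first by rewrite nnegmxD.
  have -> : - (a *m Ud + a *m B) =
            (a *m (Ud *m W) - l *: a) *m Ad + (l - 1) *: (a *m Ad).
    rewrite mulmxBl -mulmxA HAd -scalemxAl scalerBl scale1r.
    by rewrite mulmxBr mulmxDr addrA subrK addrAC subrr add0r.
  by rewrite nnegmxD ?nnegmxZ ?mxOverM // subr_ge0.
have aUd0 : a *m Ud = 0.
  by apply: nnegmx_anti => //; rewrite -[- _]addr0 -aUdB0 addKr.
have l_gt0 : 0 < l := lt_le_trans ltr01 l_ge1.
apply: nnegmx_anti => //.
have -> : - a = l^-1 *: (a *m (Ud *m W) - l *: a).
  by rewrite mulmxA aUd0 mul0mx sub0r scalerN scalerA mulVf ?scale1r ?gt_eqF.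
by rewrite nnegmxZ // invr_ge0 ltW.
Qed.

Local Notation mxC H := (map_mx (fun x : R => (x%:C)%C) H).

Lemma normc_ge0 (x : R[i]) : 0 <= Normc.normc x.
Proof. exact: (@normr_ge0 R (Rcomplex R)). Qed.

Lemma normc_real (r : R) : 0 <= r -> Normc.normc (r%:C)%C = r.
Proof.
by move=> r_ge0; rewrite /Normc.normc /= expr0n addr0 sqrtr_sqr ger0_norm.
Qed.

Lemma eigenvalue_normc_subinvariant (n : nat) (H : 'M[R]_n) (z : R[i]) :
  H \is a nnegmx -> eigenvalue (mxC H) z ->
  exists a : 'rV[R]_n,
    [/\ a != 0, a \is a nnegmx & a *m H - Normc.normc z *: a \is a nnegmx].
Proof.
move=> /mxOverP H_ge0 /eigenvalueP [y yH y_neq0].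
exists (map_mx (@Normc.normc R) y); split.
- apply: contra y_neq0 => /eqP /matrixP ya0; apply/eqP/matrixP => i j.
  by rewrite mxE; apply: Normc.eq0_normc; have := ya0 i j; rewrite !mxE.
- by apply/mxOverP => i j; rewrite mxE nnegrE normc_ge0.
- apply/mxOverP => i j; rewrite (ord1 i) !mxE nnegrE subr_ge0 -Normc.normcM.
  have -> : z * y 0 j = (y *m mxC H) 0 j by rewrite yH mxE.
  rewrite mxE; apply: le_trans (@ler_norm_sum R (Rcomplex R) _ _ _ _) _.
  apply: ler_sum => k _.
  by rewrite !mxE -[leLHS]/(Normc.normc _) Normc.normcM normc_real -?nnegrE.
Qed.

Lemma spectral_radius_lt (n : nat) (H : 'M[R]_n) (b : R) : 0 < b ->
  (forall z, eigenvalue (mxC H) z -> Normc.normc z < b) ->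
  spectral_radius H < b.
Proof.
move=> b_gt0 eig_lt; rewrite /spectral_radius.
have [rs char_rs] := closed_field_poly_normal (char_poly (mxC H)).
have eig_rs z : eigenvalue (mxC H) z = (z \in rs).
  rewrite eigenvalue_root_char char_rs (monicP (char_poly_monic _)) scale1r.
  exact: root_prod_XsubC.
pose c := \big[Order.max/0]_(z <- rs) Normc.normc z.
have c_lt : c < b.
  rewrite /c big_seq; apply: (big_ind (fun x => x < b)) => //.
    by move=> x y x_lt y_lt; rewrite gt_max x_lt y_lt.
  by move=> z; rewrite -eig_rs; exact: eig_lt.
set S := (X in sup X).
have [[x Sx]|/forallNP S0] := pselect (exists x, S x).
  apply: le_lt_trans c_lt; apply: ge_sup; first by exists x.
  by move=> _ [z eig_z <-]; apply: le_bigmax_seq; rewrite // -eig_rs.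
have -> : S = set0 by apply/seteqP; split => // y /S0.
by rewrite sup0.
Qed.
End ProperWeakRegularSplittings.

Theorem theorem4p2 (R : realType) (m n : nat)
  (A M N U V : 'M[R]_(m, n)) (Ad Md Ud : 'M[R]_(n, m)) :
  is_mpinv A Ad -> mx_nonneg Ad ->
  proper_weak_regular_splitting A M N Md ->
  proper_weak_regular_splitting A U V Ud ->
  spectral_radius (Ud *m V *m Md *m N) < 1.
Proof.
move=> pinvA Ad_ge0 splitM splitU.
have -> : Ud *m V *m Md *m N = Ud *m (V *m Md *m N) by rewrite !mulmxA.
have HAd : Ud *m (V *m Md *m N) *m Ad = Ad - (Ud + Ud *m V *m Md).
  rewrite -!mulmxA (mulmxA Md) (proper_splitting_mulmx_pinv pinvA splitM).
  rewrite !mulmxBr !mulmxA (proper_splitting_mulmx_pinv pinvA splitU).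
  by rewrite opprD addrA.
case: splitM => _ _ _ /mx_nonneg_nnegmx Md_ge0 /mx_nonneg_nnegmx MdN_ge0.
case: splitU => _ _ _ /mx_nonneg_nnegmx Ud_ge0 /mx_nonneg_nnegmx UdV_ge0.
have H_ge0 : Ud *m (V *m Md *m N) \is a nnegmx.
  by rewrite !mulmxA -mulmxA mxOverM.
apply: spectral_radius_lt => [|z /(eigenvalue_normc_subinvariant H_ge0)].
  exact: ltr01.
move=> [a [a_neq0 a_ge0 sub_a]]; rewrite ltNge; apply: contra a_neq0 => z_ge1.
apply/eqP; apply: subinvariant_row_eq0 HAd sub_a => //.
- exact: mx_nonneg_nnegmx.
- by rewrite mxOverM.
Qed.
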